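(* Under the standing assumptions (with $K\neq 0$), for $r\in[0,r_A)$ the matrix $I-\tilde A-rK$ is invertible and $M(r):=L[I-\tilde A-rK]^{-1}B$ satisfies: (i) $M(r)$ is entrywise strictly positive and depends continuously on $r$; (ii) for $0\le r_1<r_2<r_A$, $M(r_1)<M(r_2)$ entrywise strictly (every entry strictly increases); (iii) $r\mapsto\lambda_{\max}(M(r))$ is strictly increasing on $[0,r_A)$ and $\lambda_{\max}(M(r))\to+\infty$ as $r\to r_A^-$.
   Context: Fix $n\ge 2$. $A$ and $K$ are $n\times n$ entrywise nonnegative real matrices, with $K$ not the zero matrix; $\delta_1,\dots,\delta_n\in(0,1]$, $D=K\,\mathrm{diag}(\delta_1,\dots,\delta_n)$, and $\tilde A=A+D$. $L=\mathrm{diag}(l_1,\dots,l_n)$ with all $l_j>0$. $B$ is an $n\times n$ entrywise nonnegative matrix with no zero column. Standing assumption: $\tilde A$ is irreducible and $\lambda_{\max}(\tilde A)<1$, where $\lambda_{\max}(X)$ denotes the spectral radius of a square matrix $X$. $r_A>0$ denotes the (technical maximum) profit rate defined by $\lambda_{\max}(\tilde A+r_AK)=1$; for $r\in[0,r_A)$ one has $\lambda_{\max}(\tilde A+rK)<1$. *)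

From HB Require Import structures.
From mathcomp Require Import all_boot all_order all_algebra.
From mathcomp Require Import all_classical all_reals all_analysis.
From mathcomp Require Import complex.
Set Implicit Arguments. Unset Strict Implicit. Unset Printing Implicit Defensive.
Import Order.TTheory GRing.Theory Num.Theory.
Import numFieldNormedType.Exports.
Local Open Scope ring_scope.
Local Open Scope classical_set_scope.

Definition complexify (R : realType) (n : nat) (X : 'M[R]_n) : 'M[R[i]]_n :=
  map_mx (fun x => (x%:C)%C) X.

Definition spectral_radius (R : realType) (n : nat) (X : 'M[R]_n) : R :=
  sup [set Normc.normc z | z in [set z : R[i] | eigenvalue (complexify X) z]].

Definition mx_nonneg (R : realType) (m n : nat) (X : 'M[R]_(m, n)) :=
  forall i j, 0 <= X i j.
Definition mx_pos (R : realType) (m n : nat) (X : 'M[R]_(m, n)) :=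
  forall i j, 0 < X i j.

(* Irreducibility of a square matrix: it is not permutation-similar to a
   block (upper) triangular matrix, i.e. there is no nonempty proper set S of
   indices with X i j = 0 for all i outside S and j in S. *)
Definition mx_irreducible (R : realType) (n : nat) (X : 'M[R]_n) :=
  forall S : {set 'I_n}, S != finset.set0 -> S != [set: 'I_n]%SET ->
    exists i j, [/\ i \notin S, j \in S & X i j != 0].

Definition Mmat (R : realType) (n : nat) (L At K B : 'M[R]_n) (r : R) : 'M[R]_n :=
  L *m invmx (1%:M - At - r *: K) *m B.

From HB Require Import structures.
From mathcomp Require Import all_boot all_order all_algebra.
From mathcomp Require Import all_classical all_reals all_analysis.
From mathcomp Require Import complex.
From mathcomp Require Import ring lra zify.
Import Order.TTheory GRing.Theory Num.Theory.
Import numFieldNormedType.Exports.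
Local Open Scope ring_scope.
Local Open Scope classical_set_scope.
Set Implicit Arguments. Unset Strict Implicit. Unset Printing Implicit Defensive.

(* For 0 <= r < r_A the matrix X(r) = At + r K is nonnegative with spectral
   radius < 1, so 1 - t X(r) is invertible for t in [0, 1]; following the
   inverse along t, a minimum principle keeps it nonnegative, hence the
   resolvent N(r) = (1 - X(r))^-1 exists and is nonnegative.  The expansions
   N = 1 + X N = 1 + N X and the irreducibility of At give a Harnack
   inequality between the entries of N(r), so N(r) > 0.  The resolvent
   identity N(r2) - N(r1) = (r2 - r1) N(r1) K N(r2) makes N, hence
   M = L N B, strictly increasing, and a Collatz-Wielandt bound transfers
   this to the spectral radius.  Finally, if some entry of N(r) stayed below W
   for every r, Harnack would bound all entries uniformly; writing a
   subinvariant vector y of At + r_A K as y = y (1 - X(r)) N(r) with r close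
   to r_A then contradicts rho(At + r_A K) = 1.  So N, and with it rho(M),
   blows up at r_A. *)

Section MatrixLimits.
Context {R : realType} {T : Type} {F : set_system T} {FF : Filter F}.

Lemma cvg_det (m : nat) (f : T -> 'M[R]_m) (A : 'M[R]_m) :
  (forall i j, f x i j @[x --> F] --> A i j) -> \det (f x) @[x --> F] --> \det A.
Proof.
move=> fA; rewrite /determinant; under eq_cvg do rewrite /determinant.
apply: (cvg_big add_continuous) => // s _; apply: cvgM; first exact: cvg_cst.
by apply: (cvg_big mul_continuous) => // i _; exact: fA.
Qed.

Lemma cvg_mulmx (m n p : nat) (f : T -> 'M[R]_(m, n)) (g : T -> 'M[R]_(n, p))
    (A : 'M[R]_(m, n)) (B : 'M[R]_(n, p)) :
  (forall i j, f x i j @[x --> F] --> A i j) ->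
  (forall i j, g x i j @[x --> F] --> B i j) ->
  forall i j, (f x *m g x) i j @[x --> F] --> (A *m B) i j.
Proof.
move=> fA gB i j; rewrite mxE; under eq_cvg do rewrite mxE.
by apply: (cvg_big add_continuous) => // k _; apply: cvgM.
Qed.

Lemma cvg_invmx (m : nat) (f : T -> 'M[R]_m) (A : 'M[R]_m) : A \in unitmx ->
  (forall i j, f x i j @[x --> F] --> A i j) ->
  forall i j, invmx (f x) i j @[x --> F] --> invmx A i j.
Proof.
move=> A_unit fA i j.
have det_cvg := cvg_det fA.
have detA_neq0 : \det A != 0 by rewrite -unitfE -unitmxE.
have cof_cvg : (\det (f x))^-1 * cofactor (f x) j i @[x --> F] -->
               (\det A)^-1 * cofactor A j i.
  apply: cvgM; first exact: cvgV.
  apply: cvgM; first exact: cvg_cst.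
  by apply: cvg_det => a b; rewrite !mxE; under eq_cvg do rewrite !mxE; exact: fA.
rewrite /invmx A_unit !mxE; apply: cvg_trans cof_cvg; apply: near_eq_cvg.
near=> x; have detf_neq0 : \det (f x) != 0.
  by near: x; exact: cvgr_neq0 det_cvg detA_neq0.
by rewrite unitmxE unitfE detf_neq0 !mxE.
Unshelve. all: by end_near.
Qed.

Lemma cvg_mx_entrywise (m n : nat) (f : T -> 'M[R]_(m, n)) (A : 'M[R]_(m, n)) :
  (forall i j, f x i j @[x --> F] --> A i j) -> f x @[x --> F] --> A.
Proof.
move=> fA; apply/cvgrPdist_le => /= e e0; near=> x.
rewrite /Num.Def.normr /= mx_normrE (bigmax_le _ (ltW e0)) //= => i _.
rewrite !mxE /=; move: i; near: x; apply: filter_forall => /= i.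
exact: ((cvgrPdist_le _ _).1 (fA i.1 i.2)).
Unshelve. all: by end_near.
Qed.

End MatrixLimits.

Lemma cvg_invmx_affine (R : realType) (n : nat) (P Q : 'M[R]_n) (t0 : R) :
  (P - t0 *: Q) \in unitmx ->
  forall i j, invmx (P - t *: Q) i j @[t --> t0] --> invmx (P - t0 *: Q) i j.
Proof.
move=> unit_t0; apply: cvg_invmx => // i j; rewrite !mxE.
under eq_cvg do rewrite !mxE.
by apply: cvgB; [exact: cvg_cst | apply: cvgM; [exact: cvg_id | exact: cvg_cst]].
Qed.

Lemma ler_sum_term (R : numDomainType) (I : finType) (F : I -> R) (j : I) :
  (forall i, 0 <= F i) -> F j <= \sum_i F i.
Proof. by move=> F0; rewrite (bigD1 j) //= lerDl sumr_ge0. Qed.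

Lemma exists_pos_lbound (R : realDomainType) (I : finType) (f : I -> R) :
  (forall i, 0 < f i) -> exists2 m, 0 < m & forall i, m <= f i.
Proof.
move=> f_gt0; exists (\big[Num.min/1]_i f i); last by move=> i; exact: bigmin_le.
by apply: lt_bigmin => // i _; exact: f_gt0.
Qed.

Section NonnegMatrices.
Variable R : realType.
Implicit Types (m n p q : nat).

Lemma mx_add_entry m n (A B : 'M[R]_(m, n)) i j : (A + B) i j = A i j + B i j.
Proof. by rewrite !mxE. Qed.

Lemma mx_sub_entry m n (A B : 'M[R]_(m, n)) i j : (A - B) i j = A i j - B i j.
Proof. by rewrite !mxE. Qed.

Lemma mx_addZ_entry m n (A B : 'M[R]_(m, n)) (a : R) i j :
  (A + a *: B) i j = A i j + a * B i j.
Proof. by rewrite !mxE. Qed.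

Lemma mx_subZ_entry m n (A B : 'M[R]_(m, n)) (a : R) i j :
  (A - a *: B) i j = A i j - a * B i j.
Proof. by rewrite !mxE. Qed.

Lemma mx_nonneg_mul m n p (A : 'M[R]_(m, n)) (B : 'M[R]_(n, p)) :
  mx_nonneg A -> mx_nonneg B -> mx_nonneg (A *m B).
Proof. by move=> A0 B0 i j; rewrite mxE sumr_ge0 // => k _; rewrite mulr_ge0. Qed.

Lemma mx_nonneg_scale m n (a : R) (A : 'M[R]_(m, n)) :
  0 <= a -> mx_nonneg A -> mx_nonneg (a *: A).
Proof. by move=> a0 A0 i j; rewrite mxE mulr_ge0. Qed.

Lemma mx_nonneg_neq0_pos_entry m n (A : 'M[R]_(m, n)) :
  mx_nonneg A -> A != 0 -> exists a b, 0 < A a b.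
Proof.
move=> A0; apply: contraNP => no_pos; apply/eqP/matrixP => a b; rewrite mxE.
by apply/eqP; rewrite eq_le A0 andbT leNgt; apply/negP => Aab; apply: no_pos; exists a, b.
Qed.

Lemma mx_pos_mulmx_row m n p (A : 'M[R]_(m, n)) (P : 'M[R]_(n, p)) :
  mx_nonneg A -> (forall i, exists k, 0 < A i k) -> mx_pos P -> mx_pos (A *m P).
Proof.
move=> A0 A_row P_pos i j; have [k Aik] := A_row i; rewrite mxE.
apply: lt_le_trans (ler_sum_term (F := fun l => A i l * P l j) k _); first exact: mulr_gt0.
by move=> l; apply: mulr_ge0; [exact: A0 | exact: ltW].
Qed.

Lemma mx_pos_mulmx_col m n p (P : 'M[R]_(m, n)) (B : 'M[R]_(n, p)) :
  mx_pos P -> mx_nonneg B -> (forall j, exists k, 0 < B k j) -> mx_pos (P *m B).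
Proof.
move=> P_pos B0 B_col i j; have [k Bkj] := B_col j; rewrite mxE.
apply: lt_le_trans (ler_sum_term (F := fun l => P i l * B l j) k _); first exact: mulr_gt0.
by move=> l; apply: mulr_ge0; [exact: ltW | exact: B0].
Qed.

Lemma mx_pos_mulmx_nonneg_neq0 m n p q (P : 'M[R]_(m, n)) (A : 'M[R]_(n, p))
    (Q : 'M[R]_(p, q)) :
  mx_pos P -> mx_nonneg A -> A != 0 -> mx_pos Q -> mx_pos (P *m A *m Q).
Proof.
move=> P_pos A0 A_neq0 Q_pos; have [a [b Aab]] := mx_nonneg_neq0_pos_entry A0 A_neq0.
apply: mx_pos_mulmx_row => // [|i]; first by apply: mx_nonneg_mul => // ? ?; exact: ltW.
exists b; rewrite mxE.
apply: lt_le_trans (ler_sum_term (F := fun l => P i l * A l b) a _); first exact: mulr_gt0.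
by move=> l; apply: mulr_ge0; [exact: ltW | exact: A0].
Qed.

Lemma nonneg_row_max n (y : 'rV[R]_n) : mx_nonneg y -> y != 0 ->
  exists2 j, 0 < y 0 j & forall k, y 0 k <= y 0 j.
Proof.
move=> y0 /eqP yn0; have [i yi] : exists i, y 0 i != 0.
  apply/existsP; apply: contra_notT yn0; rewrite negb_exists => /forallP yi0.
  by apply/rowP => i; rewrite mxE; exact/eqP/negPn.
pose j := [arg max_(j > i) y 0 j]%O.
have jmax k : y 0 k <= y 0 j.
  by rewrite /j; case: arg_maxP => // j' _; exact.
by exists j => //; apply: lt_le_trans (jmax i); rewrite lt_def yi y0.
Qed.

End NonnegMatrices.

Section SpectralRadius.
Variable R : realType.
Implicit Types (n : nat) (z : R[i]).

Local Notation spectrum X :=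
  [set Normc.normc z | z in [set z : R[i] | eigenvalue (complexify X) z]].

Lemma normc_real (k : R) : Normc.normc k%:C%C = `|k|.
Proof. by rewrite /= expr0n /= addr0 sqrtr_sqr. Qed.

Lemma normc_ge0 z : 0 <= Normc.normc z.
Proof. by case: z => a b /=; rewrite sqrtr_ge0. Qed.

Lemma normc_sum n (F : 'I_n -> R[i]) :
  Normc.normc (\sum_i F i) <= \sum_i Normc.normc (F i).
Proof.
elim/big_ind2: _ => [|x1 x2 y1 y2 le1 le2|//]; first by rewrite Normc.normc0.
exact: le_trans (le_normcD _ _) (lerD le1 le2).
Qed.

Lemma eigenvalue_subinvariant n (X : 'M[R]_n) z :
  eigenvalue (complexify X) z ->
  exists y : 'rV[R]_n, [/\ mx_nonneg y, y != 0 &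
    forall j, Normc.normc z * y 0 j <= (y *m map_mx Num.norm X) 0 j].
Proof.
move=> /eigenvalueP [x xX x_neq0]; exists (map_mx (@Normc.normc R) x); split.
- by move=> i j; rewrite mxE normc_ge0.
- apply: contraNneq x_neq0 => /rowP x0; apply/eqP/rowP => j.
  by have := x0 j; rewrite !mxE => /Normc.eq0_normc.
- move=> j; rewrite mxE -Normc.normcM.
  have -> : z * x 0 j = (x *m complexify X) 0 j by rewrite xX mxE.
  rewrite !mxE; apply: le_trans (normc_sum _) _; apply: ler_sum => i _.
  by rewrite !mxE Normc.normcM normc_real.
Qed.

Lemma map_mx_norm_nonneg n (X : 'M[R]_n) : mx_nonneg X -> map_mx Num.norm X = X.
Proof. by move=> X0; apply/matrixP => i j; rewrite mxE ger0_norm. Qed.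

Lemma eigenvalue_bound n (X : 'M[R]_n) z : eigenvalue (complexify X) z ->
  Normc.normc z <= \sum_i \sum_j `|X i j|.
Proof.
move=> /eigenvalue_subinvariant [y [y0 y_neq0 zy]].
have [j yj0 jmax] := nonneg_row_max y0 y_neq0.
rewrite -(ler_pM2r yj0); apply: le_trans (zy j) _; rewrite mxE.
apply: le_trans (_ : _ <= \sum_i y 0 j * `|X i j|) _.
  by apply: ler_sum => i _; rewrite mxE ler_wpM2r.
rewrite -mulr_sumr mulrC ler_wpM2r ?(ltW yj0) //; apply: ler_sum => i _.
by apply: ler_sum_term => k; rewrite normr_ge0.
Qed.

Lemma spectrum_ubound n (X : 'M[R]_n) : has_ubound (spectrum X).
Proof. by exists (\sum_i \sum_j `|X i j|) => _ [z Xz <-]; exact: eigenvalue_bound. Qed.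

Lemma eigenvalue_le_spectral_radius n (X : 'M[R]_n) z :
  eigenvalue (complexify X) z -> Normc.normc z <= spectral_radius X.
Proof. by move=> Xz; apply: (ub_le_sup (spectrum_ubound X)); exists z. Qed.

Lemma spectral_radius_le n (X : 'M[R]_n) (c : R) : 0 <= c ->
  (forall z, eigenvalue (complexify X) z -> Normc.normc z <= c) ->
  spectral_radius X <= c.
Proof.
move=> c0 zc; rewrite /spectral_radius.
have [->|/set0P spec_neq0] := eqVneq (spectrum X) set0; first by rewrite sup0.
by apply: ge_sup => // _ [z Xz <-]; exact: zc.
Qed.

Lemma spectral_radius_gt n (X : 'M[R]_n) (a : R) : 0 <= a -> a < spectral_radius X ->
  exists2 z, eigenvalue (complexify X) z & a < Normc.normc z.
Proof.
move=> a0 a_lt; have [spec0|/set0P spec_neq0] := eqVneq (spectrum X) set0.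
  by move: a_lt; rewrite /spectral_radius spec0 sup0 ltNge a0.
by have [_ [z Xz <-]] := sup_gt spec_neq0 a_lt; exists z.
Qed.

Lemma real_eigenvalue_le_spectral_radius n (X : 'M[R]_n) (v : 'rV[R]_n) (s : R) :
  v != 0 -> v *m X = s *: v -> `|s| <= spectral_radius X.
Proof.
move=> v_neq0 vX; rewrite -normc_real; apply: eigenvalue_le_spectral_radius.
apply/eigenvalueP; exists (map_mx (real_complex R) v); last by rewrite map_mx_eq0.
by rewrite /complexify -map_mxM vX map_mxZ.
Qed.

End SpectralRadius.

Section NonnegInverse.
Variable R : realType.
Implicit Types (n : nat).

Lemma invmx_1subr_expandl n (Y : 'M[R]_n) : (1%:M - Y) \in unitmx ->
  invmx (1%:M - Y) = 1%:M + Y *m invmx (1%:M - Y).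
Proof.
move=> U; apply/eqP; rewrite -subr_eq -[X in X - _]mul1mx -mulmxBl.
by rewrite mulmxV.
Qed.

Lemma invmx_1subr_expandr n (Y : 'M[R]_n) : (1%:M - Y) \in unitmx ->
  invmx (1%:M - Y) = 1%:M + invmx (1%:M - Y) *m Y.
Proof.
move=> U; apply/eqP; rewrite -subr_eq -[X in X - _]mulmx1 -mulmxBr.
by rewrite mulVmx.
Qed.

(* A minimum principle: a most negative entry of a row of the inverse,
   measured against [v], would contradict the positivity of [v (1 - Y)]. *)
Lemma invmx_nonneg_of_pos_row n (Y : 'M[R]_n) (v : 'rV[R]_n) :
  mx_nonneg Y -> (1%:M - Y) \in unitmx -> mx_pos v -> mx_pos (v *m (1%:M - Y)) ->
  mx_nonneg (invmx (1%:M - Y)).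
Proof.
move=> Y0 U v0 vZ i k; rewrite leNgt; apply/negP => Nik.
set Z := 1%:M - Y; pose u := row i (invmx Z).
have uZ : u *m Z = row i 1%:M by rewrite -row_mul mulVmx.
pose g j := invmx Z i j / v 0 j; pose j0 := [arg min_(j < k) g j]%O.
have j0min j : g j0 <= g j by rewrite /j0; case: arg_minP => // j' _; exact.
have g0 : g j0 < 0.
  by apply: le_lt_trans (j0min k) _; rewrite /g pmulr_llt0 ?invr_gt0.
pose w := u - g j0 *: v.
have w0 : mx_nonneg w.
  by move=> a j; rewrite [a]ord1 !mxE subr_ge0 -ler_pdivlMr //; exact: j0min.
have wj0 : w 0 j0 = 0 by rewrite !mxE divfK ?subrr // gt_eqF.
have : 0 < (w *m Z) 0 j0.
  have := vZ 0 j0; rewrite mulmxBl -scalemxAl uZ !mxE -mulNr => vZj0.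
  by rewrite ltr_wpDl ?ler0n // mulr_gt0 ?oppr_gt0.
have -> : (w *m Z) 0 j0 = w 0 j0 - (w *m Y) 0 j0.
  by rewrite /Z mulmxBr mulmx1 !mxE.
by rewrite wj0 sub0r oppr_gt0 ltNge (mx_nonneg_mul w0 Y0).
Qed.

Lemma invmx_nonneg_step n (X : 'M[R]_n) (t : R) : mx_nonneg X -> 0 <= t ->
  (1%:M - t *: X) \in unitmx -> mx_nonneg (invmx (1%:M - t *: X)) ->
  exists2 d, 0 < d & forall u, t <= u <= t + d ->
    (1%:M - u *: X) \in unitmx -> mx_nonneg (invmx (1%:M - u *: X)).
Proof.
move=> X0 t0 Ut Nt0; pose v : 'rV_n := const_mx 1 *m invmx (1%:M - t *: X).
have vX0 : mx_nonneg (v *m X).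
  by apply: mx_nonneg_mul => //; apply: mx_nonneg_mul => // ? ?; rewrite mxE.
have vE j : v 0 j = 1 + t * (v *m X) 0 j.
  rewrite {1}/v (invmx_1subr_expandr Ut) mulmxDr mulmx1 mulmxA -scalemxAr.
  by rewrite mx_addZ_entry mxE.
pose s := \sum_j (v *m X) 0 j.
have s0 : 0 <= s by rewrite sumr_ge0.
exists (s + 1)^-1 => [|u /andP [tu ud] Uu]; first by rewrite invr_gt0 ltr_wpDl.
apply: (invmx_nonneg_of_pos_row (v := v)) => //.
- by apply: mx_nonneg_scale => //; exact: le_trans tu.
- by move=> a j; rewrite [a]ord1 vE ltr_wpDr ?mulr_ge0.
move=> a j; rewrite [a]ord1 mulmxBr mulmx1 -scalemxAr mx_subZ_entry vE.
have vXs : (v *m X) 0 j <= s by apply: ler_sum_term => k; exact: vX0.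
have ds : (u - t) * (v *m X) 0 j < 1.
  apply: le_lt_trans (_ : _ <= (s + 1)^-1 * s) _.
    by apply: ler_pM; rewrite ?subr_ge0 ?vX0 // lerBlDl.
  by rewrite mulrC ltr_pdivrMr ?ltr_wpDl // mul1r ltrDl.
lra.
Qed.

Lemma invmx_nonneg_left_closed n (X : 'M[R]_n) (T : R) : 0 < T ->
  (1%:M - T *: X) \in unitmx ->
  (forall u, 0 < u < T -> mx_nonneg (invmx (1%:M - u *: X))) ->
  mx_nonneg (invmx (1%:M - T *: X)).
Proof.
move=> T_gt0 UT N_left i j; rewrite leNgt; apply/negP => NTij.
have N_cvg : invmx (1%:M - x *: X) i j @[x --> T^'-] --> invmx (1%:M - T *: X) i j.
  exact: cvg_at_left_filter (cvg_invmx_affine (i := i) (j := j) UT).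
have : \forall x \near T^'-, [/\ 0 < x, x < T & invmx (1%:M - x *: X) i j < 0].
  near=> x; split.
  - by near: x; exact: nbhs_left_gt.
  - by near: x; exact: nbhs_left_lt.
  - by near: x; exact: cvgr_lt N_cvg 0 NTij.
move=> /filter_ex [x [x0 xT Nx]].
by have := N_left x; rewrite x0 xT => /(_ isT i j); rewrite leNgt Nx.
Unshelve. all: by end_near.
Qed.

Lemma invmx_nonneg_of_segment n (X : 'M[R]_n) : mx_nonneg X ->
  (forall t, 0 <= t <= 1 -> (1%:M - t *: X) \in unitmx) ->
  mx_nonneg (invmx (1%:M - X)).
Proof.
move=> X0 U; pose N t := invmx (1%:M - t *: X).
pose S := [set t | 0 <= t <= 1 /\ forall u, 0 <= u <= t -> mx_nonneg (N u)].
have N0 : mx_nonneg (N 0).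
  by rewrite /N scale0r subr0 invmx1 => i j; rewrite mxE ler0n.
have S0 : S 0.
  split=> [|u /andP [u0 u_le0]]; first by rewrite lexx ler01.
  by have -> : u = 0 by apply/le_anti; rewrite u0 u_le0.
have S_ub : has_ubound S by exists 1 => t [/andP []].
set T := sup S.
have T0 : 0 <= T by exact: ub_le_sup.
have T1 : T <= 1 by apply: ge_sup; [exists 0 | move=> t [/andP []]].
have UT : (1%:M - T *: X) \in unitmx by rewrite U // T0 T1.
have N_left u : 0 <= u < T -> mx_nonneg (N u).
  move=> /andP [u0 uT]; have [t [_ Nt] ut] := sup_gt (ex_intro _ 0 S0) uT.
  by apply: Nt; rewrite u0 ltW.
have NT : mx_nonneg (N T).
  have [->|T_neq0] := eqVneq T 0; first exact: N0.
  apply: invmx_nonneg_left_closed UT _; first by rewrite lt_def T_neq0.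
  by move=> u /andP [u0 uT]; apply: N_left; rewrite ltW.
have ST : S T.
  split=> [|u /andP [u0]]; first by rewrite T0 T1.
  by rewrite le_eqVlt => /orP [/eqP -> //|uT]; apply: N_left; rewrite u0.
have T_eq1 : T = 1.
  apply/eqP; rewrite eq_le T1 leNgt; apply/negP => T_lt1.
  have [d d0 Nd] := invmx_nonneg_step X0 T0 UT NT.
  pose d' := Num.min d (1 - T).
  have d'0 : 0 < d' by rewrite lt_min d0 subr_gt0.
  have d'd : d' <= d by rewrite ge_min lexx.
  have d'T : d' <= 1 - T by rewrite ge_min lexx orbT.
  have : S (T + d').
    split=> [|u /andP [u0 ud]]; first by apply/andP; split; lra.
    have [uT|Tu] := leP u T; first by apply: ST.2; rewrite u0.
    by apply: Nd; [apply/andP; split; lra | apply: U; apply/andP; split; lra].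
  by move=> /(ub_le_sup S_ub); rewrite -/T; lra.
have [_ NS] := ST; move: (NS 1); rewrite T_eq1 /N scale1r.
by apply; rewrite ler01 lexx.
Qed.

Lemma invmx_nonneg_of_eigen_lt1 n (X : 'M[R]_n) : mx_nonneg X ->
  (forall (s : R) (v : 'rV[R]_n), 1 <= s -> v *m X = s *: v -> v = 0) ->
  (1%:M - X) \in unitmx /\ mx_nonneg (invmx (1%:M - X)).
Proof.
move=> X0 eig_lt1.
have U t : 0 <= t <= 1 -> (1%:M - t *: X) \in unitmx.
  move=> /andP [t0 t1]; rewrite unitmxE unitfE; apply/negP => /det0P [v v_neq0].
  rewrite mulmxBr mulmx1 -scalemxAr => /eqP; rewrite subr_eq0 => /eqP vE.
  have t_neq0 : t != 0 by apply: contraNneq v_neq0 => t_eq0; rewrite vE t_eq0 scale0r.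
  apply/negP: v_neq0; rewrite negbK; apply/eqP/(eig_lt1 t^-1).
    by rewrite invf_ge1 // lt_def t_neq0.
  by rewrite {2}vE scalerA mulVf // scale1r.
split; first by rewrite -[X]scale1r U // ler01 lexx.
by apply: invmx_nonneg_of_segment.
Qed.

Lemma invmx_nonneg_of_spectral_radius_lt1 n (X : 'M[R]_n) :
  mx_nonneg X -> spectral_radius X < 1 ->
  (1%:M - X) \in unitmx /\ mx_nonneg (invmx (1%:M - X)).
Proof.
move=> X0 rho_lt1; apply: invmx_nonneg_of_eigen_lt1 => // s v s1 vX.
apply/eqP; apply: contraT => v_neq0.
have := real_eigenvalue_le_spectral_radius v_neq0 vX.
rewrite ger0_norm ?(le_trans ler01 s1) // => /(le_trans s1).
by move=> /(lt_le_trans rho_lt1); rewrite ltxx.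
Qed.

(* Collatz--Wielandt: if [rho Q < c], then [1 - Q / c] has a nonnegative
   inverse, which maps the nonpositive row [y (1 - Q / c)] to [y]; so [y = 0]. *)
Lemma le_spectral_radius_of_subinvariant n (Q : 'M[R]_n) (y : 'rV[R]_n) (c : R) :
  mx_nonneg Q -> mx_nonneg y -> y != 0 -> 0 < c ->
  (forall j, c * y 0 j <= (y *m Q) 0 j) -> c <= spectral_radius Q.
Proof.
move=> Q0 y0 y_neq0 c0 cy; rewrite leNgt; apply/negP => rho_lt.
pose X := c^-1 *: Q.
have [U N0] : (1%:M - X) \in unitmx /\ mx_nonneg (invmx (1%:M - X)).
  apply: invmx_nonneg_of_eigen_lt1 => [|s v s1 vX].
    by apply: mx_nonneg_scale => //; rewrite invr_ge0 ltW.
  apply/eqP; apply: contraT => v_neq0.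
  have vQ : v *m Q = (c * s) *: v.
    by rewrite -scalerA -vX /X -scalemxAr scalerA mulfV ?gt_eqF // scale1r.
  have := real_eigenvalue_le_spectral_radius v_neq0 vQ.
  rewrite ger0_norm ?mulr_ge0 ?(ltW c0) ?(le_trans ler01 s1) // => cs_le.
  by have := le_lt_trans cs_le rho_lt; rewrite -{2}[c]mulr1 ltr_pM2l // ltNge s1.
pose w := y *m (1%:M - X).
have w_le0 j : w 0 j <= 0.
  rewrite /w mulmxBr mulmx1 -scalemxAr mx_subZ_entry subr_le0.
  by rewrite -(ler_pM2l c0) mulrA mulfV ?gt_eqF // mul1r.
have yE : y = w *m invmx (1%:M - X) by rewrite /w -mulmxA mulmxV // mulmx1.
apply/negP: y_neq0; rewrite negbK; apply/eqP/rowP => j; rewrite mxE.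
apply/le_anti; rewrite y0 andbT yE mxE -oppr_ge0 -sumrN sumr_ge0 // => k _.
by rewrite -mulNr mulr_ge0 ?oppr_ge0.
Qed.

Lemma min_entry_le_spectral_radius n (Q : 'M[R]_n) (m : R) : (0 < n)%N -> 0 < m ->
  (forall i j, m <= Q i j) -> m <= spectral_radius Q.
Proof.
move=> n_gt0 m0 mQ.
have Q0 : mx_nonneg Q by move=> i j; apply: le_trans (mQ i j); exact: ltW.
apply: (le_spectral_radius_of_subinvariant (y := const_mx 1)) => //.
- by move=> ? ?; rewrite mxE.
- apply/eqP => /rowP /(_ (Ordinal n_gt0)); rewrite !mxE; exact/eqP/oner_neq0.
move=> j; have -> : ((const_mx 1 : 'rV_n) *m Q) 0 j = \sum_i Q i j.
  by rewrite mxE; apply: eq_bigr => i _; rewrite mxE mul1r.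
rewrite mxE mulr1; apply: le_trans (mQ j j) _.
by apply: (ler_sum_term (F := fun i => Q i j)) => i; exact: Q0.
Qed.

Lemma spectral_radius_lt n (P Q : 'M[R]_n) : (0 < n)%N ->
  mx_nonneg P -> (forall i j, P i j < Q i j) -> spectral_radius P < spectral_radius Q.
Proof.
move=> n_gt0 P0 PQ.
have [m m0 mQP] : exists2 m, 0 < m & forall ij : 'I_n * 'I_n, m <= Q ij.1 ij.2 - P ij.1 ij.2.
  by apply: exists_pos_lbound => ij; rewrite subr_gt0.
have PmQ i j : P i j + m <= Q i j by have := mQP (i, j); rewrite lerBrDl addrC.
have mQ : m <= spectral_radius Q.
  apply: min_entry_le_spectral_radius => // i j.
  by apply: le_trans (PmQ i j); rewrite lerDr P0.
suff rhoP : spectral_radius P <= spectral_radius Q - m.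
  by apply: le_lt_trans rhoP _; rewrite ltrBlDr ltrDl.
apply: spectral_radius_le => [|z Pz]; first by rewrite subr_ge0.
have [y [y0 y_neq0 zy]] := eigenvalue_subinvariant Pz.
rewrite map_mx_norm_nonneg // in zy.
rewrite lerBrDr; apply: (le_spectral_radius_of_subinvariant (y := y)) => //.
- by move=> i j; apply: le_trans (PmQ i j); rewrite addr_ge0 ?P0 ?ltW.
- by rewrite ltr_wpDl ?normc_ge0.
move=> j; rewrite mulrDl; apply: le_trans (lerD (zy j) (_ : m * y 0 j <= m * \sum_i y 0 i)) _.
  by rewrite ler_wpM2l ?(ltW m0) // ler_sum_term // => i; exact: y0.
rewrite !mxE mulr_sumr -big_split /=; apply: ler_sum => i _.
by rewrite [m * _]mulrC -mulrDr ler_wpM2l.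
Qed.

(* Writing [y = y (1 - Y) (1 - Y)^-1] for a subinvariant vector [y] of
   [Y + E] shows that the entries of [(1 - Y)^-1] cannot stay small when
   [rho (Y + E)] is close to [1]. *)
Lemma spectral_radius_near1_invmx_bound n (Y E : 'M[R]_n) (b kap eps : R) :
  mx_nonneg Y -> mx_nonneg E -> (1%:M - Y) \in unitmx ->
  mx_nonneg (invmx (1%:M - Y)) -> (forall i j, invmx (1%:M - Y) i j <= b) ->
  (forall j, \sum_i E i j <= kap) -> 0 <= eps <= 1 ->
  1 - eps < spectral_radius (Y + E) -> 1 <= n%:R * b * (eps + kap).
Proof.
move=> Y0 E0 U N0 Nb Ekap /andP [eps0 eps1] rho_gt.
have [z YEz z_gt] : exists2 z, eigenvalue (complexify (Y + E)) z & 1 - eps < Normc.normc z.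
  by apply: spectral_radius_gt rho_gt; rewrite subr_ge0.
have [y [y0 y_neq0 zy]] := eigenvalue_subinvariant YEz.
have YE0 : mx_nonneg (Y + E) by move=> i j; rewrite mxE addr_ge0.
rewrite map_mx_norm_nonneg // in zy.
have [j yj0 jmax] := nonneg_row_max y0 y_neq0.
have kap0 : 0 <= kap by apply: le_trans (Ekap j); rewrite sumr_ge0.
pose w := y *m (1%:M - Y).
have w_le k : w 0 k <= (eps + kap) * y 0 j.
  have yEk : (y *m E) 0 k <= kap * y 0 j.
    rewrite mxE; apply: le_trans (_ : _ <= \sum_i y 0 j * E i k) _.
      by apply: ler_sum => i _; rewrite ler_wpM2r.
    by rewrite -mulr_sumr mulrC ler_wpM2r ?(ltW yj0).
  have zyk := zy k; rewrite mulmxDr mx_add_entry in zyk.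
  have : (1 - Normc.normc z) * y 0 k <= eps * y 0 j.
    by apply: le_trans (ler_wpM2r (y0 0 k) (_ : _ <= eps)) (ler_wpM2l eps0 (jmax k)); lra.
  rewrite /w mulmxBr mulmx1 mx_sub_entry; lra.
have yE : y = w *m invmx (1%:M - Y) by rewrite /w -mulmxA mulmxV // mulmx1.
have : y 0 j <= n%:R * b * (eps + kap) * y 0 j.
  rewrite {1}yE mxE; apply: le_trans (_ : _ <= \sum_(k < n) (eps + kap) * y 0 j * b) _.
    apply: ler_sum => k _; apply: le_trans (ler_wpM2r (N0 k j) (w_le k)) _.
    by rewrite ler_wpM2l ?mulr_ge0 ?addr_ge0 ?(ltW yj0).
  by rewrite sumr_const card_ord -mulr_natl; lra.
by rewrite -{1}[y 0 j]mul1r ler_pM2r.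
Qed.

End NonnegInverse.

Definition mx_irreducible_by (R : realType) (n : nat) (c : R) (X : 'M[R]_n) :=
  forall S : {set 'I_n}, S != finset.set0 -> S != [set: 'I_n]%SET ->
    exists i k, [/\ i \notin S, k \in S & c <= X i k].

Section Irreducible.
Variable R : realType.
Implicit Types (n : nat).

Lemma mx_irreducible_by_exists n (X : 'M[R]_n) : mx_nonneg X -> mx_irreducible X ->
  exists2 c, 0 < c <= 1 & mx_irreducible_by c X.
Proof.
move=> X0 X_irr.
pose g (p : 'I_n * 'I_n) := if X p.1 p.2 != 0 then X p.1 p.2 else 1.
have [m m0 mg] : exists2 m, 0 < m & forall p, m <= g p.
  by apply: exists_pos_lbound => p; rewrite /g; case: ifP => // Xp; rewrite lt_def Xp X0.
exists (Num.min m 1); first by rewrite lt_min m0 ltr01 ge_min lexx orbT.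
move=> S S0 ST; have [i [k [iS kS Xik]]] := X_irr S S0 ST.
by exists i, k; split=> //; rewrite ge_min; have := mg (i, k); rewrite /g /= Xik => ->.
Qed.

Lemma invmx_1subr_ger n (Y : 'M[R]_n) a i k : mx_nonneg Y -> (1%:M - Y) \in unitmx ->
  mx_nonneg (invmx (1%:M - Y)) ->
  invmx (1%:M - Y) a i * Y i k <= invmx (1%:M - Y) a k.
Proof.
move=> Y0 U N0; rewrite [in X in _ <= X](invmx_1subr_expandr U) mx_add_entry.
apply: ler_wpDl; first by rewrite ?mxE ler0n.
by rewrite mxE; apply: (ler_sum_term (F := fun l => _ a l * Y l k)) => l; rewrite mulr_ge0.
Qed.

Lemma invmx_1subr_gel n (Y : 'M[R]_n) p q j : mx_nonneg Y -> (1%:M - Y) \in unitmx ->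
  mx_nonneg (invmx (1%:M - Y)) ->
  Y p q * invmx (1%:M - Y) q j <= invmx (1%:M - Y) p j.
Proof.
move=> Y0 U N0; rewrite [in X in _ <= X](invmx_1subr_expandl U) mx_add_entry.
apply: ler_wpDl; first by rewrite ?mxE ler0n.
by rewrite mxE; apply: (ler_sum_term (F := fun l => Y p l * _ l j)) => l; rewrite mulr_ge0.
Qed.

Lemma invmx_1subr_diag_ge1 n (Y : 'M[R]_n) j : mx_nonneg Y -> (1%:M - Y) \in unitmx ->
  mx_nonneg (invmx (1%:M - Y)) -> 1 <= invmx (1%:M - Y) j j.
Proof.
move=> Y0 U N0; rewrite (invmx_1subr_expandl U) mx_add_entry !mxE eqxx mulr1n lerDl.
by rewrite sumr_ge0 // => l _; rewrite mulr_ge0.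
Qed.

(* The sets [{i | c^k f i <= f j}] grow strictly with [k] until they are
   everything, so [k = n] suffices. *)
Lemma harnack_spread n (f : 'I_n -> R) (c : R) : 0 < c <= 1 -> (forall i, 0 <= f i) ->
  (forall S : {set 'I_n}, S != finset.set0 -> S != [set: 'I_n]%SET ->
     exists i k, [/\ i \notin S, k \in S & c * f i <= f k]) ->
  forall i j, c ^+ n * f i <= f j.
Proof.
move=> /andP [c0 c1] f0 chain i j.
pose S k := [set i | c ^+ k * f i <= f j]%SET.
have jS k : j \in S k.
  by rewrite inE; apply: ler_piMl; [exact: f0 | exact: exprn_ile1 (ltW c0) c1].
have S_sub k : S k \subset S k.+1.
  apply/fintype.subsetP => i'; rewrite !inE => le_i'; apply: le_trans le_i'.
  rewrite exprSr -mulrA; apply: ler_wpM2l; first by rewrite exprn_ge0 ?ltW.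
  exact: ler_piMl (f0 i') c1.
have S_card k : (minn k.+1 n <= #|S k|)%N.
  elim: k => [|k IHk].
    by rewrite (leq_trans (geq_minl _ _)) // card_gt0; apply/set0Pn; exists j.
  have [ST|SnT] := eqVneq (S k) [set: 'I_n]%SET.
    suff -> : S k.+1 = [set: 'I_n]%SET by rewrite cardsT card_ord geq_minr.
    by apply/eqP; rewrite finset.eqEsubset finset.subsetT -ST S_sub.
  have Sk0 : S k != finset.set0 by apply/set0Pn; exists j.
  have [i' [k' [i'S k'S ck']]] := chain _ Sk0 SnT.
  have i'S1 : i' \in S k.+1.
    rewrite inE exprSr -mulrA; apply: le_trans (_ : c ^+ k * f k' <= _).
      by apply: ler_wpM2l => //; rewrite exprn_ge0 ?ltW.
    by move: k'S; rewrite inE.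
  have /proper_card lt_card : S k \proper S k.+1.
    by rewrite properE S_sub; apply/subsetPn; exists i'.
  by apply: leq_trans lt_card; lia.
have : S n = [set: 'I_n]%SET.
  apply/eqP; rewrite eqEcard finset.subsetT cardsT card_ord.
  by have := S_card n; rewrite minnE subSnn subn1.
by move/setP/(_ i); rewrite !inE.
Qed.

Lemma invmx_harnack n (Y : 'M[R]_n) (c : R) : mx_nonneg Y -> 0 < c <= 1 ->
  mx_irreducible_by c Y -> (1%:M - Y) \in unitmx -> mx_nonneg (invmx (1%:M - Y)) ->
  forall i j a b, c ^+ (n + n) * invmx (1%:M - Y) i j <= invmx (1%:M - Y) a b.
Proof.
move=> Y0 c01 Yc U N0 i j a b; set N := invmx (1%:M - Y).
have c0 : 0 <= c by case/andP: c01 => /ltW.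
have row_spread i' k : c ^+ n * N a i' <= N a k.
  apply: (harnack_spread (f := fun k => N a k)) c01 (N0 a) _ i' k => S S0 ST.
  have [i'' [k' [iS kS cY]]] := Yc S S0 ST; exists i'', k'; split=> //.
  apply: le_trans (invmx_1subr_ger a i'' k' Y0 U N0).
  by rewrite mulrC; apply: ler_wpM2l.
have col_spread i' p : c ^+ n * N i' j <= N p j.
  apply: (harnack_spread (f := fun p => N p j)) c01 (N0^~ j) _ i' p => S S0 ST.
  have SC0 : ~: S != finset.set0.
    by apply: contra ST => /eqP SC; rewrite -[S]finset.setCK SC finset.setC0.
  have SCT : ~: S != [set: 'I_n]%SET.
    by apply: contra S0 => /eqP SC; rewrite -[S]finset.setCK SC finset.setCT.
  have [p' [q [pS qS cY]]] := Yc _ SC0 SCT.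
  exists q, p'; split; [by move: qS; rewrite inE | by move: pS; rewrite inE negbK |].
  apply: le_trans (invmx_1subr_gel p' q j Y0 U N0).
  exact: ler_wpM2r.
rewrite exprD -mulrA; apply: le_trans (row_spread j b).
by apply: ler_wpM2l; [exact: exprn_ge0 | exact: col_spread].
Qed.

Lemma invmx_pos n (Y : 'M[R]_n) (c : R) : mx_nonneg Y -> 0 < c <= 1 ->
  mx_irreducible_by c Y -> (1%:M - Y) \in unitmx -> mx_nonneg (invmx (1%:M - Y)) ->
  mx_pos (invmx (1%:M - Y)).
Proof.
move=> Y0 c01 Yc U N0 a b.
apply: lt_le_trans (invmx_harnack Y0 c01 Yc U N0 a a a b).
rewrite mulr_gt0 ?exprn_gt0 //; first by case/andP: c01.
exact: lt_le_trans ltr01 (invmx_1subr_diag_ge1 a Y0 U N0).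
Qed.

End Irreducible.

Lemma exists_small_perturbation (R : realFieldType) (G kap h : R) :
  0 <= G -> 0 <= kap -> 0 < h -> exists2 d, 0 < d <= 1 & d < h /\ G * (d + d * kap) < 1.
Proof.
move=> G0 kap0 h0; pose s := G * (1 + kap); pose m := Num.min 1 h.
have s0 : 0 <= s by rewrite mulr_ge0 // addr_ge0.
have m0 : 0 < m by rewrite lt_min ltr01 h0.
have m1 : m <= 1 by rewrite ge_min lexx.
have mh : m <= h by rewrite ge_min lexx orbT.
have s1 : 0 < 2 * (s + 1) by rewrite mulr_gt0 // ltr_wpDl.
pose d := m / (2 * (s + 1)).
have d0 : 0 < d by apply: divr_gt0.
have dE : d * (2 * (s + 1)) = m by rewrite /d mulfVK // lt0r_neq0.
have ds0 : 0 <= d * s by rewrite mulr_ge0 // ltW.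
exists d; first by apply/andP; split; lra.
have -> : G * (d + d * kap) = s * d by rewrite /s; ring.
split; lra.
Qed.

Section Resolvent.
Variables (R : realType) (n : nat) (At K : 'M[R]_n) (rA : R).
Hypotheses (At0 : mx_nonneg At) (K0 : mx_nonneg K) (K_neq0 : K != 0)
  (At_irr : mx_irreducible At) (rA_gt0 : 0 < rA)
  (rho_rA : spectral_radius (At + rA *: K) = 1)
  (rho_lt1 : forall r, 0 <= r < rA -> spectral_radius (At + r *: K) < 1).

Definition resolvent (r : R) := invmx (1%:M - At - r *: K).

Lemma resolvent_1subr r : 1%:M - At - r *: K = 1%:M - (At + r *: K).
Proof. by rewrite opprD addrA. Qed.

Lemma perturbation_nonneg r : 0 <= r -> mx_nonneg (At + r *: K).
Proof. by move=> r0 i j; rewrite mx_addZ_entry addr_ge0 ?mulr_ge0. Qed.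

Lemma dim_gt0 : (0 < n)%N.
Proof.
have [a [b _]] := mx_nonneg_neq0_pos_entry K0 K_neq0.
exact: leq_ltn_trans (leq0n a) (ltn_ord a).
Qed.

Lemma perturbation_invmx_nonneg r : 0 <= r < rA ->
  (1%:M - (At + r *: K)) \in unitmx /\ mx_nonneg (invmx (1%:M - (At + r *: K))).
Proof.
move=> r_in; apply: invmx_nonneg_of_spectral_radius_lt1 (rho_lt1 r_in).
by apply: perturbation_nonneg; case/andP: r_in.
Qed.

Lemma resolvent_unit r : 0 <= r < rA -> (1%:M - At - r *: K) \in unitmx.
Proof. by rewrite resolvent_1subr => /perturbation_invmx_nonneg []. Qed.

Lemma irreducible_by_perturbation :
  exists2 c, 0 < c <= 1 & forall r, 0 <= r -> mx_irreducible_by c (At + r *: K).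
Proof.
have [c c01 Atc] := mx_irreducible_by_exists At0 At_irr.
exists c => // r r0 S S0 ST; have [i [k [iS kS cik]]] := Atc S S0 ST.
by exists i, k; split=> //; apply: le_trans cik _; rewrite mx_addZ_entry lerDl mulr_ge0.
Qed.

Lemma resolvent_harnack : exists2 c, 0 < c & forall r, 0 <= r < rA ->
  forall i j a b, c ^+ (n + n) * resolvent r i j <= resolvent r a b.
Proof.
have [c c01 Xc] := irreducible_by_perturbation.
exists c => [|r r_in]; first by case/andP: c01.
have r0 : 0 <= r by case/andP: r_in.
have [U N0] := perturbation_invmx_nonneg r_in.
rewrite /resolvent resolvent_1subr.
exact: invmx_harnack (perturbation_nonneg r0) c01 (Xc r r0) U N0.
Qed.

Lemma resolvent_pos r : 0 <= r < rA -> mx_pos (resolvent r).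
Proof.
move=> r_in; have r0 : 0 <= r by case/andP: r_in.
have [c c01 Xc] := irreducible_by_perturbation.
have [U N0] := perturbation_invmx_nonneg r_in.
rewrite /resolvent resolvent_1subr.
exact: invmx_pos (perturbation_nonneg r0) c01 (Xc r r0) U N0.
Qed.

Lemma resolventD r1 r2 : 0 <= r1 < rA -> 0 <= r2 < rA ->
  resolvent r2 - resolvent r1 = (r2 - r1) *: (resolvent r1 *m K *m resolvent r2).
Proof.
move=> r1_in r2_in.
have U1 := resolvent_unit r1_in; have U2 := resolvent_unit r2_in.
have -> : resolvent r2 - resolvent r1 =
    resolvent r1 *m ((1%:M - At - r1 *: K) - (1%:M - At - r2 *: K)) *m resolvent r2.
  by rewrite mulmxBr mulmxBl mulVmx // mul1mx -mulmxA mulmxV // mulmx1.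
have -> : (1%:M - At - r1 *: K) - (1%:M - At - r2 *: K) = (r2 - r1) *: K.
  by apply/matrixP => i j; rewrite !mxE; ring.
by rewrite -scalemxAr -scalemxAl.
Qed.

Lemma resolvent_lt r1 r2 : 0 <= r1 -> r1 < r2 -> r2 < rA ->
  mx_pos (resolvent r2 - resolvent r1).
Proof.
move=> r10 r12 r2A.
have r1_in : 0 <= r1 < rA by rewrite r10 (lt_trans r12 r2A).
have r2_in : 0 <= r2 < rA by rewrite (le_trans r10 (ltW r12)) r2A.
rewrite resolventD // => i j; rewrite mxE mulr_gt0 ?subr_gt0 //.
exact: (mx_pos_mulmx_nonneg_neq0 (resolvent_pos r1_in) K0 K_neq0 (resolvent_pos r2_in)).
Qed.

(* If every [resolvent r] had an entry below [W], Harnack would bound all its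
   entries uniformly, contradicting [rho (At + rA K) = 1]. *)
Lemma resolvent_unbounded (W : R) :
  exists2 r, 0 <= r < rA & forall i j, W <= resolvent r i j.
Proof.
apply: contrapT => no_r.
have [c c0 harnack] := resolvent_harnack.
pose b := W / c ^+ (n + n).
have Nb r : 0 <= r < rA -> forall i j, resolvent r i j <= b.
  move=> r_in i j; have [a [a' small]] : exists a a', resolvent r a a' < W.
    apply: contra_notP no_r => big; exists r => // a a'.
    by rewrite leNgt; apply/negP => small; apply: big; exists a, a'.
  rewrite ler_pdivlMr ?exprn_gt0 // mulrC; apply: le_trans (ltW small).
  exact: harnack.
have b0 : 0 <= b.
  have r_in : (0 : R) <= 0 < rA by rewrite lexx rA_gt0.
  pose a0 := Ordinal dim_gt0.
  by apply: le_trans (Nb 0 r_in a0 a0); exact: ltW (resolvent_pos r_in a0 a0).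
pose kap := \sum_j \sum_i K i j.
have Kkap j : \sum_i K i j <= kap.
  by apply: (ler_sum_term (F := fun j => \sum_i K i j)) => j'; rewrite sumr_ge0.
have kap0 : 0 <= kap by rewrite sumr_ge0 // => j _; rewrite sumr_ge0.
have [d /andP [d0 d1] [d_rA small]] :=
  exists_small_perturbation (mulr_ge0 (ler0n _ n) b0) kap0 rA_gt0.
have r_in : 0 <= rA - d < rA by apply/andP; split; lra.
have [U N0] := perturbation_invmx_nonneg r_in.
suff : 1 <= n%:R * b * (d + d * kap) by lra.
apply: (spectral_radius_near1_invmx_bound (Y := At + (rA - d) *: K) (E := d *: K)) => //.
- by apply: perturbation_nonneg; lra.
- exact: mx_nonneg_scale (ltW d0) K0.
- by move=> i j; rewrite -resolvent_1subr; exact: Nb.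
- move=> j; have -> : \sum_i (d *: K) i j = d * \sum_i K i j.
    by rewrite mulr_sumr; apply: eq_bigr => i _; rewrite mxE.
  by rewrite ler_wpM2l ?(ltW d0).
- by rewrite (ltW d0) d1.
- by rewrite -addrA -scalerDl subrK rho_rA; lra.
Qed.

Variables (L B : 'M[R]_n).
Hypotheses (L0 : mx_nonneg L) (L_row : forall i, exists k, 0 < L i k)
  (B0 : mx_nonneg B) (B_col : forall j, exists k, 0 < B k j).

Local Notation M := (Mmat L At K B).

Lemma Mmat_pos r : 0 <= r < rA -> mx_pos (M r).
Proof.
by move=> r_in; apply: mx_pos_mulmx_col => //; apply: mx_pos_mulmx_row => //; exact: resolvent_pos.
Qed.

Lemma Mmat_lt r1 r2 : 0 <= r1 -> r1 < r2 -> r2 < rA -> forall i j, M r1 i j < M r2 i j.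
Proof.
move=> r10 r12 r2A i j; rewrite -subr_gt0 -mx_sub_entry /Mmat -mulmxBl -mulmxBr.
by apply: mx_pos_mulmx_col => //; apply: mx_pos_mulmx_row => //; exact: resolvent_lt.
Qed.

Lemma Mmat_continuous : {within `[0, rA[, continuous M}.
Proof.
apply: continuous_in_subspaceT => r; rewrite inE /= in_itv /= => r_in.
apply: cvg_mx_entrywise; apply: cvg_mulmx => [|i j]; last exact: cvg_cst.
apply: cvg_mulmx => [i j|]; first exact: cvg_cst.
exact: cvg_invmx_affine (resolvent_unit r_in).
Qed.

Lemma spectral_radius_Mmat_lt r1 r2 : 0 <= r1 -> r1 < r2 -> r2 < rA ->
  spectral_radius (M r1) < spectral_radius (M r2).
Proof.
move=> r10 r12 r2A; apply: spectral_radius_lt dim_gt0 _ (Mmat_lt r10 r12 r2A).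
by move=> i j; apply: ltW; apply: Mmat_pos; rewrite r10 (lt_trans r12 r2A).
Qed.

Lemma spectral_radius_Mmat_unbounded : spectral_radius (M r) @[r --> rA^'-] --> +oo.
Proof.
pose J : 'M[R]_n := const_mx 1.
have LJB_pos : mx_pos (L *m J *m B).
  by apply: mx_pos_mulmx_col => //; apply: mx_pos_mulmx_row => // ? ?; rewrite mxE.
have [m m0 mLJB] := exists_pos_lbound (fun ij : 'I_n * 'I_n => LJB_pos ij.1 ij.2).
apply/cvgryPgt => A; pose W := (`|A| + 1) / m.
have Wm : W * m = `|A| + 1 by rewrite mulfVK ?gt_eqF.
have W0 : 0 <= W by apply: divr_ge0 (ltW m0); exact: addr_ge0 (normr_ge0 A) ler01.
have [r0 /andP [r00 r0A] Wr0] := resolvent_unbounded W.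
near=> r.
have r0r : r0 < r by near: r; exact: nbhs_left_gt.
have rrA : r < rA by near: r; exact: nbhs_left_lt.
have W_le i j : W <= resolvent r i j.
  apply: le_trans (Wr0 i j) (ltW _).
  by have := resolvent_lt r00 r0r rrA i j; rewrite mx_sub_entry subr_gt0.
have M_ge i j : W * m <= M r i j.
  apply: le_trans (_ : W * (L *m J *m B) i j <= _).
    by rewrite ler_wpM2l //; exact: mLJB (i, j).
  have : mx_nonneg (L *m (resolvent r - W *: J) *m B).
    apply: mx_nonneg_mul => //; apply: mx_nonneg_mul => // a b.
    by rewrite mx_subZ_entry mxE mulr1 subr_ge0.
  by rewrite mulmxBr mulmxBl -scalemxAr -scalemxAl => /(_ i j); rewrite mx_subZ_entry subr_ge0.
apply: lt_le_trans (min_entry_le_spectral_radius dim_gt0 _ M_ge); rewrite Wm.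
- by apply: le_lt_trans (ler_norm A) _; rewrite ltrDl.
- by rewrite ltr_wpDl.
Unshelve. all: by end_near.
Qed.

End Resolvent.

Unset Implicit Arguments.

Theorem mainTheorem8 (R : realType) (n : nat) (A K B : 'M[R]_n)
  (delta l : 'I_n -> R) (rA : R) :
  (2 <= n)%N ->
  mx_nonneg A -> mx_nonneg K -> K != 0 ->
  (forall j, 0 < delta j <= 1) ->
  (forall j, 0 < l j) ->
  mx_nonneg B -> (forall j, exists i, B i j != 0) ->
  let D := K *m diag_mx (\row_j delta j) in
  let At := A + D in
  let L := diag_mx (\row_j l j) in
  mx_irreducible At -> spectral_radius At < 1 ->
  0 < rA -> spectral_radius (At + rA *: K) = 1 ->
  (forall r, 0 <= r < rA -> spectral_radius (At + r *: K) < 1) ->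
  let M := Mmat L At K B in
  (forall r, 0 <= r < rA -> (1%:M - At - r *: K) \in unitmx) /\
  (* (i) *)
  (forall r, 0 <= r < rA -> mx_pos (M r)) /\
  {within `[0, rA[, continuous M} /\
  (* (ii) *)
  (forall r1 r2, 0 <= r1 -> r1 < r2 -> r2 < rA ->
     forall i j, M r1 i j < M r2 i j) /\
  (* (iii) *)
  (forall r1 r2, 0 <= r1 -> r1 < r2 -> r2 < rA ->
     spectral_radius (M r1) < spectral_radius (M r2)) /\
  (spectral_radius (M r) @[r --> rA^'-] --> +oo).
Proof.
move=> _ A0 K0 K_neq0 delta01 l_gt0 B0 B_col D At L At_irr _ rA_gt0 rho_rA rho_lt1 M.
have At0 : mx_nonneg At.
  move=> i j; rewrite /At /D mul_mx_diag !mxE addr_ge0 // mulr_ge0 //.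
  by case/andP: (delta01 j) => /ltW.
have L0 : mx_nonneg L by move=> i j; rewrite /L !mxE mulrn_wge0 // ltW.
have L_row i : exists k, 0 < L i k by exists i; rewrite /L !mxE eqxx mulr1n.
have B_col_pos j : exists k, 0 < B k j.
  by have [k Bkj] := B_col j; exists k; rewrite lt_def Bkj B0.
split; first exact: resolvent_unit.
split; first exact: Mmat_pos.
split; first exact: Mmat_continuous.
split; first exact: Mmat_lt.
split; first exact: spectral_radius_Mmat_lt.
exact: spectral_radius_Mmat_unbounded.
Qed.
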